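(* Let $V$ be a finite nonempty set and $f:\{0,1\}^V\to\{0,1\}^V$. (1) $f$ is positive-circular if and only if $f$ is 2-critical and non-expansive. (2) $f$ is negative-circular if and only if $f$ is 0-critical and non-expansive.
   Context: For $x,y\in\{0,1\}^V$, $d(x,y)$ is the Hamming distance; $f$ is non-expansive if $d(f(x),f(y))\le d(x,y)$ for all $x,y$. For nonempty $I\subseteq V$ and $z\in\{0,1\}^{V\setminus I}$, the subnetwork of $f$ induced by $z$ is $h:\{0,1\}^I\to\{0,1\}^I$ with $h(x|_I)=f(x)|_I$ for all $x$ whose restriction to $V\setminus I$ is $z$; a strict subnetwork is a subnetwork different from $f$. $f$ is 2-critical if $f$ has at least two fixed points and every strict subnetwork of $f$ has at most one fixed point; $f$ is 0-critical if $f$ has no fixed point and every strict subnetwork of $f$ has at least one fixed point. For $x^{j\alpha}$ the point equal to $x$ except its $j$-component is $\alpha$, the global interaction graph $G(f)$ is the signed digraph on $V$ with a positive (resp. negative) arc from $j$ to $i$ iff $f_i(x^{j1})-f_i(x^{j0})=1$ (resp. $=-1$) for at least one $x$. A cycle is a subgraph with at most one arc between any ordered pair of vertices whose underlying unsigned digraph is a directed cycle; positive (negative) if it has an even (odd) number of negative arcs. $f$ is positive-circular (negative-circular) if $G(f)$ itself is a positive (negative) cycle through all vertices of $V$. *)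

From mathcomp Require Import all_boot.
Set Implicit Arguments. Unset Strict Implicit. Unset Printing Implicit Defensive.

Section BN.
Variable V : finType.

Definition config := {ffun V -> bool}.

Definition hdist (x y : config) : nat := #|[set i | x i != y i]|.

Definition non_expansive (f : config -> config) : Prop :=
  forall x y, hdist (f x) (f y) <= hdist x y.

Definition setc (x : config) (j : V) (a : bool) : config :=
  [ffun k => if k == j then a else x k].

Definition fixed_points (f : config -> config) : {set config} :=
  [set x : config | f x == x].

(* Fixed points of the subnetwork h of f induced by z in {0,1}^(V\I):
   a fixed point y in {0,1}^I of h corresponds bijectively to the
   configuration x with x|_I = y and x|_(V\I) = z; it is a fixed point
   iff f(x)|_I = x|_I.  Here z is given as a full configuration of which
   only the restriction to V\I is used. *)
Definition sub_fixed_points (f : config -> config) (I : {set V}) (z : config)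
  : {set config} :=
  [set x : config | [forall i, (i \notin I) ==> (x i == z i)]
           && [forall i in I, f x i == x i]].

(* A subnetwork (I, z) is strict iff I <> V (for I = V it is f itself;
   for I a proper subset its domain differs from {0,1}^V). *)
Definition two_critical (f : config -> config) : Prop :=
  1 < #|fixed_points f| /\
  forall (I : {set V}) (z : config),
    I != set0 -> I \proper [set: V] -> #|sub_fixed_points f I z| <= 1.

Definition zero_critical (f : config -> config) : Prop :=
  #|fixed_points f| = 0 /\
  forall (I : {set V}) (z : config),
    I != set0 -> I \proper [set: V] -> 1 <= #|sub_fixed_points f I z|.

Definition pos_arc (f : config -> config) (j i : V) : bool :=
  [exists x : config, f (setc x j true) i && ~~ f (setc x j false) i].
Definition neg_arc (f : config -> config) (j i : V) : bool :=
  [exists x : config, ~~ f (setc x j true) i && f (setc x j false) i].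

(* G(f) itself is a cycle through all vertices: at most one signed arc
   between any ordered pair, and the underlying unsigned digraph is the
   directed cycle given by a duplicate-free enumeration s of V
   (arc j -> next s j). *)
Definition hamiltonian_cycle_graph (f : config -> config) (s : seq V) : Prop :=
  [/\ uniq s, (forall v, v \in s),
      (forall j i, (pos_arc f j i || neg_arc f j i) = (i == next s j)) &
      (forall j i, ~~ (pos_arc f j i && neg_arc f j i))].

Definition num_neg_arcs (f : config -> config) (s : seq V) : nat :=
  #|[set j | neg_arc f j (next s j)]|.

Definition positive_circular (f : config -> config) : Prop :=
  exists s : seq V, hamiltonian_cycle_graph f s /\ ~~ odd (num_neg_arcs f s).

Definition negative_circular (f : config -> config) : Prop :=
  exists s : seq V, hamiltonian_cycle_graph f s /\ odd (num_neg_arcs f s).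

End BN.

From mathcomp Require Import all_boot zify.
Set Implicit Arguments. Unset Strict Implicit. Unset Printing Implicit Defensive.

(* A circular network is, along its cycle [s], the map [f u (next s j) = u j (+) c j]
   with [c j] the sign of the arc out of [j]: it permutes coordinates, hence is
   non-expansive; every strict subnetwork has exactly one fixed point, obtained by walking
   the cycle from a coordinate outside it; and [f] has two or no fixed points according
   to the parity of [c].
   Conversely, criticality provides [x] with [f x = a] and [f (compl x) = compl a]
   (two complementary fixed points, resp. two points moved only at one coordinate [i],
   with [a = flip i x]).  Non-expansiveness then gives [hdist (f v) a = hdist v x], so
   [f] read from [x] to [a] is a weight-preserving non-expansive map [g]. Such a map is
   monotone on supports and sends each unit vector [e_j] to some [e_(d j)]; criticality
   rules out proper nonempty sets [A] with [g (indic A) = indic A], which forces [d] to be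
   one cyclic permutation with [g u (d j) = u j], i.e. [f] is circular. *)

Section Hamming.
Variable V : finType.
Local Notation cfg := (config V).

Definition cfg0 : cfg := [ffun _ => false].
Definition compl (x : cfg) : cfg := [ffun j => ~~ x j].
Definition xorc (x u : cfg) : cfg := [ffun j => x j (+) u j].
Definition flip (i : V) (u : cfg) : cfg := [ffun j => u j (+) (j == i)].
Definition indic (A : {set V}) : cfg := [ffun j => j \in A].
Definition supp (u : cfg) : {set V} := [set j | u j].
Definition hdist_on (D : {set V}) (a b : cfg) : nat := #|[set j in D | a j != b j]|.

Lemma hdist_eq0 (a b : cfg) : (hdist a b == 0) = (a == b).
Proof.
rewrite /hdist cards_eq0; apply/eqP/eqP => [abE|->]; last first.
  by apply/setP => j; rewrite !inE eqxx.
apply/ffunP => j; apply/eqP; apply: contraT => ab.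
by have := in_set0 j; rewrite -abE inE ab.
Qed.

Lemma hdistxx (a : cfg) : hdist a a = 0.
Proof. by apply/eqP; rewrite hdist_eq0. Qed.

Lemma hdist_sym (a b : cfg) : hdist a b = hdist b a.
Proof. by apply: eq_card => j; rewrite !inE eq_sym. Qed.

Lemma hdist_compl (a b : cfg) : hdist a b + hdist a (compl b) = #|V|.
Proof.
rewrite /hdist -cardsT -(cardsID [set j | a j != b j] setT) setTI; congr (_ + _);
by apply: eq_card => j; rewrite !inE ffunE; case: (a j); case: (b j).
Qed.

Lemma hdist_xorc (x a b : cfg) : hdist (xorc x a) (xorc x b) = hdist a b.
Proof.
by apply: eq_card => j; rewrite !inE !ffunE; case: (x j); case: (a j); case: (b j).
Qed.

Lemma card_supp_xorc (a b : cfg) : #|supp (xorc a b)| = hdist a b.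
Proof. by apply: eq_card => j; rewrite !inE ffunE; case: (a j); case: (b j). Qed.

Lemma hdist_supp (a b : cfg) :
  hdist a b = #|supp a :\: supp b| + #|supp b :\: supp a|.
Proof.
rewrite /hdist -(cardsID (supp a) [set i | a i != b i]); congr (_ + _);
by apply: eq_card => j; rewrite !inE; case: (a j); case: (b j).
Qed.

Lemma xorcK (x : cfg) : involutive (xorc x).
Proof. by move=> u; apply/ffunP => j; rewrite !ffunE addKb. Qed.

Lemma supp_indic (A : {set V}) : supp (indic A) = A.
Proof. by apply/setP => j; rewrite !inE ffunE. Qed.

Lemma indic_supp (u : cfg) : indic (supp u) = u.
Proof. by apply/ffunP => j; rewrite !ffunE inE. Qed.

Lemma odd_supp_xorc (u v : cfg) :
  odd #|supp (xorc u v)| = odd #|supp u| (+) odd #|supp v|.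
Proof.
have symdiff : #|supp (xorc u v)| + (#|supp u :&: supp v|).*2 = #|supp u| + #|supp v|.
  have -> : supp (xorc u v) = (supp u :\: supp v) :|: (supp v :\: supp u).
    by apply/setP => j; rewrite !inE ffunE; case: (u j); case: (v j).
  rewrite cardsU (_ : _ :&: _ = set0) ?cards0 ?subn0; last first.
    by apply/setP => j; rewrite !inE; case: (u j); case: (v j).
  rewrite -(cardsID (supp v) (supp u)) -(cardsID (supp u) (supp v)) setIC -addnn; lia.
by rewrite -oddD -symdiff oddD odd_double addbF.
Qed.

Lemma compl_of_diff_setT (x y : cfg) : [set j | x j != y j] = setT -> y = compl x.
Proof.
move=> /setP xy; apply/ffunP => j; move: (xy j); rewrite !inE ffunE.
by case: (x j); case: (y j).
Qed.

Lemma eq_flip_off (i : V) (a b : cfg) :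
  a != b -> (forall j, j != i -> a j = b j) -> a = flip i b.
Proof.
move=> ab abi; apply/ffunP => j; rewrite ffunE; case: (j =P i) => [->|/eqP ji].
  case: (boolP (a i == b i)) => [/eqP abi_i|]; last by rewrite addbT; case: (a i); case: (b i).
  by move: ab; rewrite (_ : a = b) ?eqxx //; apply/ffunP => k; case: (k =P i) => [->|/eqP /abi].
by rewrite abi ?addbF.
Qed.

Lemma hdist_on_le (D : {set V}) (a b : cfg) : hdist_on D a b <= hdist a b.
Proof. by apply: subset_leq_card; apply/subsetP => j; rewrite !inE => /andP[]. Qed.

Lemma hdist_on_off (D : {set V}) (a b : cfg) :
  (forall j, j \notin D -> a j = b j) -> hdist a b = hdist_on D a b.
Proof.
move=> abD; apply: eq_card => j; rewrite !inE.
by case: (boolP (j \in D)) => //= /abD ->; rewrite eqxx.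
Qed.

Lemma eq_hdist_on (D : {set V}) (a a' b : cfg) :
  (forall j, j \in D -> a j = a' j) -> hdist_on D a b = hdist_on D a' b.
Proof.
move=> aa'; apply: eq_card => j; rewrite !inE.
by case: (boolP (j \in D)) => //= /aa' ->.
Qed.

Lemma hdist_on_flip (D : {set V}) (i : V) (a b : cfg) : i \in D ->
  hdist_on D a (flip i b) + (a i != b i) = hdist_on D a b + (a i == b i).
Proof.
move=> iD; rewrite /hdist_on (cardsD1 i [set j in D | a j != flip i b j])
  (cardsD1 i [set j in D | a j != b j]) !inE ffunE eqxx iD /=.
have -> : #|[set j in D | a j != flip i b j] :\ i| = #|[set j in D | a j != b j] :\ i|.
  by apply: eq_card => j; rewrite !inE ffunE; case: (j =P i) => //= _; rewrite addbF.
by case: (a i); case: (b i) => /=; lia.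
Qed.

End Hamming.
Arguments cfg0 {V}.

Lemma sub_fixed_pointsP (V : finType) (f : config V -> config V) (I : {set V})
    (z x : config V) :
  reflect ((forall j, j \notin I -> x j = z j) /\ (forall j, j \in I -> f x j = x j))
          (x \in sub_fixed_points f I z).
Proof.
rewrite inE; apply: (iffP andP) => [[/forallP xz /forall_inP fx]|[xz fx]].
  by split => j; [move=> jI; move: (xz j); rewrite jI => /eqP | move/fx/eqP].
split; first by apply/forallP => j; apply/implyP => /xz ->.
by apply/forall_inP => j /fx ->.
Qed.

Section CircularForm.
Variables (V : finType) (f : config V -> config V).
Local Notation cfg := (config V).

Definition circular_form (s : seq V) (c : cfg) :=
  [/\ uniq s, forall v, v \in s & forall u j, f u (next s j) = u j (+) c j].

Variables (s : seq V) (c : cfg).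
Hypothesis fsc : circular_form s c.

Let s_uniq : uniq s. Proof. by case: fsc. Qed.
Let s_full : forall v, v \in s. Proof. by case: fsc. Qed.
Let fE : forall u j, f u (next s j) = u j (+) c j. Proof. by case: fsc. Qed.

Lemma circular_next_inj : injective (next s).
Proof. exact: can_inj (prev_next s_uniq). Qed.

Lemma circular_fconnect a b : fconnect (next s) a b.
Proof. by rewrite (fconnect_cycle (cycle_next s_uniq) (s_full a)). Qed.

Lemma circular_nonexp : non_expansive f.
Proof.
move=> u v; rewrite /hdist.
have -> : [set i | f u i != f v i] = next s @: [set j | u j != v j].
  apply/setP => i; rewrite -(next_prev s_uniq i) mem_imset ?inE ?fE;
    last exact: circular_next_inj.
  by case: (c _); case: (u _); case: (v _).
by rewrite card_imset //; exact: circular_next_inj.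
Qed.

(* [c j = x j (+) f x (next s j)], and [next s] only permutes the coordinates of [f x]. *)
Lemma odd_supp_circular x : odd #|supp c| = odd (hdist x (f x)).
Proof.
pose y : cfg := [ffun j => f x (next s j)].
have -> : supp c = supp (xorc x y).
  by apply/setP => j; rewrite !inE !ffunE fE addKb.
rewrite odd_supp_xorc; have -> : #|supp y| = #|supp (f x)|.
  rewrite -(@card_preimset _ (next s) (supp (f x)) circular_next_inj).
  by apply: eq_card => j; rewrite !inE ffunE.
by rewrite -odd_supp_xorc card_supp_xorc.
Qed.

Lemma circular_fixed_even x : f x = x -> ~~ odd #|supp c|.
Proof.
by move=> fx; rewrite (odd_supp_circular x) fx hdistxx.
Qed.

Section SubFixedPoints.
Variables (I : {set V}) (z : cfg) (a : V).
Hypothesis aI : a \notin I.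

(* Walking along the cycle from [a], each coordinate in [I] is forced by its predecessor. *)
Lemma circular_sub_fixed_exists : exists x, x \in sub_fixed_points f I z.
Proof.
pose w := fix w k := if k is k'.+1 then
    (if iter k (next s) a \in I then w k' (+) c (iter k' (next s) a) else z (iter k (next s) a))
  else z a.
have wE k : iter k (next s) a \notin I -> w k = z (iter k (next s) a).
  by case: k => [|k] //= /negbTE ->.
exists [ffun j => w (findex (next s) a j)]; apply/sub_fixed_pointsP; split => j jI;
  rewrite !ffunE; have jE := iter_findex (circular_fconnect a j).
  by rewrite wE jE.
have := findex_max (circular_fconnect a j); move: jE.
case: (findex (next s) a j) => [|k] /= jE.
  by rewrite -jE (negbTE aI) in jI.
by move=> lt_k; rewrite -jE in jI *; rewrite jI fE ffunE findex_iter // ltnW.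
Qed.

Lemma circular_sub_fixed_uniq x y :
  x \in sub_fixed_points f I z -> y \in sub_fixed_points f I z -> x = y.
Proof.
move=> /sub_fixed_pointsP[xz fx] /sub_fixed_pointsP[yz fy].
have xy k : x (iter k (next s) a) = y (iter k (next s) a).
  elim: k => [|k IHk] /=; first by rewrite xz ?yz.
  case: (boolP (next s (iter k (next s) a) \in I)) => [kI|/[dup] /xz -> /yz //].
  by rewrite -(fx _ kI) -(fy _ kI) !fE IHk.
by apply/ffunP => j; rewrite -(iter_findex (circular_fconnect a j)).
Qed.

End SubFixedPoints.

Lemma card_sub_fixed_circular (I : {set V}) (z : cfg) :
  I \proper [set: V] -> #|sub_fixed_points f I z| = 1.
Proof.
case/properP => _ [a _ aI]; have [x xF] := circular_sub_fixed_exists z aI.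
apply/eqP/cards1P; exists x; apply/setP => y; rewrite in_set1.
by apply/idP/eqP => [yF|->//]; apply: (circular_sub_fixed_uniq aI yF xF).
Qed.

Lemma circular_two_critical : 0 < #|V| -> ~~ odd #|supp c| -> two_critical f.
Proof.
move=> /card_gt0P[a _] even_c; split; last first.
  by move=> I z _ IT; rewrite card_sub_fixed_circular.
have fixed_with b : exists2 x : cfg, x a = b & f x = x.
  have aI : a \notin [set~ a] by rewrite !inE eqxx.
  have [x /sub_fixed_pointsP[xz fx]] := circular_sub_fixed_exists [ffun _ => b] aI.
  exists x; first by rewrite xz ?ffunE.
  have le1 : hdist x (f x) <= 1.
    rewrite -(cards1 a); apply: subset_leq_card; apply/subsetP => j; rewrite !inE.
    by apply: contraR => ja; rewrite fx ?inE // eqxx.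
  apply/eqP; rewrite eq_sym -hdist_eq0.
  by move: even_c le1; rewrite (odd_supp_circular x); case: (hdist x (f x)) => [|[|]].
have [x0 x0a fx0] := fixed_with false; have [x1 x1a fx1] := fixed_with true.
apply/card_gt1P; exists x0, x1; rewrite !inE fx0 fx1 !eqxx; split => //.
by apply/eqP => x01; move: x0a; rewrite x01 x1a.
Qed.

Lemma circular_zero_critical : odd #|supp c| -> zero_critical f.
Proof.
move=> odd_c; split; last first.
  by move=> I z _ IT; rewrite card_sub_fixed_circular.
apply/eqP; rewrite cards_eq0; apply/eqP/setP => x; rewrite !inE.
by apply: contraTF odd_c => /eqP /circular_fixed_even.
Qed.

End CircularForm.

Section InteractionGraph.
Variables (V : finType) (f : config V -> config V).
Local Notation cfg := (config V).

Lemma setcE (x : cfg) k b j : setc x k b j = if j == k then b else x j.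
Proof. by rewrite ffunE. Qed.

Section FromCircularForm.
Variables (s : seq V) (c : cfg).
Hypothesis fsc : circular_form f s c.

Let s_uniq : uniq s. Proof. by case: fsc. Qed.
Let fE : forall u j, f u (next s j) = u j (+) c j. Proof. by case: fsc. Qed.

Lemma pos_arc_circular j i : pos_arc f j i = (i == next s j) && ~~ c j.
Proof.
rewrite -(next_prev s_uniq i) (inj_eq (circular_next_inj fsc)) /pos_arc.
apply/existsP/idP => [[x]|/andP[/eqP <- cj]].
  by rewrite !fE !setcE; case: eqP => [->|_]; [case: (c j) | case: (x _); case: (c _)].
by exists cfg0; rewrite !fE !setcE eqxx; case: (c _) cj.
Qed.

Lemma neg_arc_circular j i : neg_arc f j i = (i == next s j) && c j.
Proof.
rewrite -(next_prev s_uniq i) (inj_eq (circular_next_inj fsc)) /neg_arc.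
apply/existsP/idP => [[x]|/andP[/eqP <- cj]].
  by rewrite !fE !setcE; case: eqP => [->|_]; [case: (c j) | case: (x _); case: (c _)].
by exists cfg0; rewrite !fE !setcE eqxx; case: (c _) cj.
Qed.

Lemma circular_form_graph : hamiltonian_cycle_graph f s.
Proof.
have [_ s_full _] := fsc.
by split=> // j i; rewrite pos_arc_circular neg_arc_circular; case: (_ == _); case: (c j).
Qed.

Lemma num_neg_arcs_circular : num_neg_arcs f s = #|supp c|.
Proof. by apply: eq_card => j; rewrite !inE neg_arc_circular eqxx. Qed.

End FromCircularForm.

Lemma setc_no_arc k i : ~~ pos_arc f k i -> ~~ neg_arc f k i ->
  forall (x : cfg) b, f (setc x k b) i = f x i.
Proof.
move=> /existsPn npos /existsPn nneg x b.
have xE : x = setc x k (x k) by apply/ffunP => j; rewrite setcE; case: eqP => [->|].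
move: (npos x) (nneg x); rewrite [in RHS]xE.
by case: b; case: (x k); case: (f (setc x k true) i); case: (f (setc x k false) i).
Qed.

Lemma no_arc_but_from j i : (forall k, k != j -> ~~ pos_arc f k i && ~~ neg_arc f k i) ->
  forall u v : cfg, u j = v j -> f u i = f v i.
Proof.
move=> only_j u v; move duv: (hdist u v) => n; elim: n u duv => [|n IHn] u duv uv_j.
  by move/eqP: duv; rewrite hdist_eq0 => /eqP ->.
have [k kD] : exists k, k \in [set k | u k != v k] by apply/card_gt0P; rewrite -/(hdist u v) duv.
have kj : k != j by apply: contraTneq kD => ->; rewrite inE uv_j eqxx.
have /andP[npos nneg] := only_j k kj.
rewrite -(setc_no_arc npos nneg u (v k)); apply: IHn; last by rewrite setcE eq_sym (negbTE kj).
move: duv; rewrite /hdist (cardsD1 k) kD add1n => -[<-]; apply: eq_card => l.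
by rewrite !inE setcE; case: (l =P k) => [->|]; rewrite ?eqxx.
Qed.

Lemma graph_circular_form s : hamiltonian_cycle_graph f s ->
  circular_form f s [ffun j => neg_arc f j (next s j)].
Proof.
move=> [s_uniq s_full arcE single_sign]; split => // u j; set i := next s j.
have depj : forall u v : cfg, u j = v j -> f u i = f v i.
  apply: no_arc_but_from => k kj; rewrite -negb_or arcE.
  by rewrite (inj_eq (can_inj (prev_next s_uniq))) eq_sym.
pose h b := f (setc cfg0 j b) i.
have hE (x : cfg) b : f (setc x j b) i = h b by apply: depj; rewrite !setcE eqxx.
have posE : pos_arc f j i = h true && ~~ h false.
  by apply/existsP/idP => [[x]|?]; [rewrite !hE | exists cfg0; rewrite !hE].
have negE : neg_arc f j i = ~~ h true && h false.
  by apply/existsP/idP => [[x]|?]; [rewrite !hE | exists cfg0; rewrite !hE].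
have := arcE j i; have := single_sign j i; rewrite ffunE eqxx posE negE.
rewrite (depj u (setc cfg0 j (u j))) ?setcE ?eqxx // -/(h (u j)).
by case: (u j); case: (h true); case: (h false).
Qed.

End InteractionGraph.

Lemma circular_graph_parity (V : finType) (f : config V -> config V) (P : pred bool) :
  (exists s, hamiltonian_cycle_graph f s /\ P (odd (num_neg_arcs f s))) <->
  (exists s c, circular_form f s c /\ P (odd #|supp c|)).
Proof.
split=> [[s [Gs Ps]]|[s [c [fsc Pc]]]].
  exists s, [ffun j => neg_arc f j (next s j)]; split; first exact: graph_circular_form.
  by congr (P (odd _)): Ps; apply: eq_card => j; rewrite !inE ffunE.
by exists s; rewrite (num_neg_arcs_circular fsc); split=> //; exact: circular_form_graph fsc.
Qed.

Lemma positive_circularE (V : finType) (f : config V -> config V) :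
  positive_circular f <-> exists s c, circular_form f s c /\ ~~ odd #|supp c|.
Proof. exact: (circular_graph_parity f negb). Qed.

Lemma negative_circularE (V : finType) (f : config V -> config V) :
  negative_circular f <-> exists s c, circular_form f s c /\ odd #|supp c|.
Proof. exact: (circular_graph_parity f id). Qed.

Section WeightPreserving.
Variables (V : finType) (g : config V -> config V).
Local Notation cfg := (config V).
Hypothesis g_nonexp : non_expansive g.
Hypothesis g_weight : forall u, #|supp (g u)| = #|supp u|.

(* With equal weights, [hdist u v = #|supp v :\: supp u|] when [supp u \subset supp v];
   non-expansiveness then leaves no room for [supp (g u) :\: supp (g v)]. *)
Lemma supp_mono (u v : cfg) : supp u \subset supp v -> supp (g u) \subset supp (g v).
Proof.
move=> uv; have := g_nonexp u v; rewrite !hdist_supp.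
rewrite (_ : supp u :\: supp v = set0) ?cards0; last by apply/eqP; rewrite setD_eq0.
have := cardsID (supp u) (supp v); rewrite (setIidPr uv).
have := cardsID (supp (g u)) (supp (g v)); have := cardsID (supp (g v)) (supp (g u)).
rewrite [supp (g v) :&: _]setIC !g_weight -setD_eq0 -cards_eq0; lia.
Qed.

Lemma fixed_indic_off (A I : {set V}) (u : cfg) :
  g (indic A) = indic A -> I = A \/ I = ~: A ->
  (forall j, j \notin I -> u j = (j \in A)) -> forall j, j \notin I -> g u j = u j.
Proof.
move=> gA [->|->] uA j jI; rewrite uA //.
  have sub : supp u \subset supp (indic A).
    rewrite supp_indic; apply/subsetP => k; rewrite inE.
    by case: (boolP (k \in A)) => // kA; rewrite uA // (negbTE kA).
  rewrite (negbTE jI); apply: negbTE; apply: contra jI => guj.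
  by have := subsetP (supp_mono sub) j; rewrite gA supp_indic inE; apply.
have jA : j \in A by rewrite inE negbK in jI.
have sub : supp (indic A) \subset supp u.
  by rewrite supp_indic; apply/subsetP => k kA; rewrite inE uA ?inE ?negbK.
by rewrite jA; have := subsetP (supp_mono sub) j; rewrite gA supp_indic !inE; apply.
Qed.

Lemma supp_g_indic1 j : exists k, supp (g (indic [set j])) == [set k].
Proof.
have /cards1P[k ->] : #|supp (g (indic [set j]))| == 1 by rewrite g_weight supp_indic cards1.
by exists k.
Qed.

Definition dest j : V := xchoose (supp_g_indic1 j).

Lemma dest_supp j : supp (g (indic [set j])) = [set dest j].
Proof. exact/eqP/(xchooseP (supp_g_indic1 j)). Qed.

Lemma imset_dest_sub (A : {set V}) : dest @: A \subset supp (g (indic A)).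
Proof.
apply/subsetP => _ /imsetP[j jA ->].
have sub : supp (indic [set j]) \subset supp (indic A) by rewrite !supp_indic sub1set.
by have := subsetP (supp_mono sub) (dest j); rewrite dest_supp set11; apply.
Qed.

Lemma dest_invariant_fixed (B : {set V}) : dest @: B = B -> g (indic B) = indic B.
Proof.
move=> dB; rewrite -[g _]indic_supp; congr indic; apply/esym/eqP.
by rewrite eqEcard -{1}dB imset_dest_sub g_weight supp_indic /=.
Qed.

Hypothesis no_fixed_indic : forall A, A != set0 -> g (indic A) = indic A -> A = setT.

(* A minimal nonempty [dest]-closed set is [dest]-invariant, hence everything. *)
Lemma dest_closed_full (C : {set V}) : C != set0 -> dest @: C \subset C -> C = setT.
Proof.
move=> C0 dC; pose P := [pred B : {set V} | (B != set0) && (dest @: B \subset B)].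
have [A minA AC] := @minset_exists _ P C (introT andP (conj C0 dC)).
have /andP[A0 dA] := minsetp minA.
have dAA : dest @: A = A.
  by apply: (minsetinf minA) => //; rewrite inE imset_eq0 A0 imsetS.
apply/eqP; rewrite eqEsubset subsetT /=.
by rewrite -(no_fixed_indic A0 (dest_invariant_fixed dAA)).
Qed.

Lemma dest_inj : injective dest.
Proof.
move=> j k djk; have dT : dest @: setT = setT.
  apply: dest_closed_full; last exact/imsetS/subsetT.
  by apply/set0Pn; exists (dest j); rewrite imset_f ?inE.
have /imset_injP injd : #|dest @: [set: V]| == #|[set: V]| by rewrite dT.
by apply: injd; rewrite ?inE.
Qed.

Lemma g_dest (u : cfg) j : g u (dest j) = u j.
Proof.
have suppE : supp (g u) = dest @: supp u.
  apply/esym/eqP; rewrite eqEcard -{2}[u]indic_supp imset_dest_sub g_weight.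
  by rewrite card_imset ?leqnn //; exact: dest_inj.
by have := mem_imset (supp u) j dest_inj; rewrite -suppE !inE.
Qed.

Lemma dest_fconnect j k : fconnect dest j k.
Proof.
pose C := [set k | fconnect dest j k].
have C0 : C != set0 by apply/set0Pn; exists j; rewrite inE connect0.
have dC : dest @: C \subset C.
  apply/subsetP => _ /imsetP[l + ->]; rewrite !inE => jl.
  exact: connect_trans jl (fconnect1 _ _).
by have := dest_closed_full C0 dC; move/setP/(_ k); rewrite !inE.
Qed.

End WeightPreserving.

Section Antipodal.
Variables (V : finType) (f : config V -> config V) (x a : config V).
Local Notation cfg := (config V).
Hypothesis f_nonexp : non_expansive f.
Hypotheses (fx : f x = a) (fxc : f (compl x) = compl a).

(* Both [hdist (f v) a <= hdist v x] and the same for the complements, while each pair of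
   distances sums to [#|V|]. *)
Lemma hdist_antipodal v : hdist (f v) a = hdist v x.
Proof.
have := f_nonexp v x; have := f_nonexp v (compl x); rewrite fx fxc.
have := hdist_compl (f v) a; have := hdist_compl v x; lia.
Qed.

Definition centred (u : cfg) : cfg := xorc a (f (xorc x u)).

Lemma centred_nonexp : non_expansive centred.
Proof. by move=> u v; rewrite /centred hdist_xorc -[hdist u v](hdist_xorc x) f_nonexp. Qed.

Lemma centred_weight u : #|supp (centred u)| = #|supp u|.
Proof.
by rewrite card_supp_xorc hdist_sym hdist_antipodal hdist_sym -card_supp_xorc xorcK.
Qed.

Lemma circular_of_antipodal : 0 < #|V| ->
  (forall A, A != set0 -> centred (indic A) = indic A -> A = setT) ->
  exists s c, circular_form f s c.
Proof.
move=> /card_gt0P[j0 _] no_fixed_indic.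
pose d := dest centred_weight.
have d_inj : injective d := dest_inj centred_nonexp no_fixed_indic.
have s_full v : v \in orbit d j0 by rewrite -fconnect_orbit (dest_fconnect centred_nonexp).
exists (orbit d j0), [ffun j => x j (+) a (d j)]; split => [||v j]; rewrite ?orbit_uniq //.
rewrite -(eqP (next_cycle (cycle_orbit d_inj j0) (s_full j))) ffunE.
have := g_dest centred_nonexp centred_weight no_fixed_indic (xorc x v) j.
rewrite /centred xorcK !ffunE -/d => E; rewrite -(addKb (a (d j)) (f v (d j))) E.
by case: (a _); case: (x j); case: (v j).
Qed.

End Antipodal.

Section Critical.
Variables (V : finType) (f : config V -> config V).
Local Notation cfg := (config V).
Hypothesis hV : 0 < #|V|.
Hypothesis f_nonexp : non_expansive f.

Lemma two_critical_fixed_compl (x y : cfg) :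
  two_critical f -> f x = x -> f y = y -> x != y -> y = compl x.
Proof.
move=> [_ sub_le1] fx fy xy; pose D := [set j | x j != y j].
have [/compl_of_diff_setT //|DT] := eqVneq D setT.
have D0 : D != set0 by apply: contra xy => /eqP D0; rewrite -hdist_eq0 /hdist -/D D0 cards0.
have DP : D \proper setT by rewrite properT.
have /card_le1_eqP le1 := sub_le1 D x D0 DP.
have inF (w : cfg) : f w = w -> (forall j, j \notin D -> w j = x j) -> w \in sub_fixed_points f D x.
  by move=> fw wx; apply/sub_fixed_pointsP; split=> // j _; rewrite fw.
have yx j : j \notin D -> y j = x j by rewrite inE negbK => /eqP.
by move: xy; rewrite (le1 x y (inF x fx (fun _ _ => erefl)) (inF y fy yx)) eqxx.
Qed.

Lemma two_critical_circular :
  two_critical f -> exists s c, circular_form f s c /\ ~~ odd #|supp c|.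
Proof.
move=> f2; have [/card_gt1P[x [y [+ + xy]]] _] := f2; rewrite !inE => /eqP fx /eqP fy.
have fxc : f (compl x) = compl x by rewrite -(two_critical_fixed_compl f2 fx fy xy).
have [|s [c fsc]] := circular_of_antipodal f_nonexp fx fxc hV.
  rewrite /centred => A A0 fA; set w := xorc x (indic A) in fA.
  have fw : f w = w by rewrite -[f w](xorcK x) fA.
  have AE : A = supp (xorc x w) by rewrite xorcK supp_indic.
  have [wx|wx] := eqVneq w x; first by move: A0; rewrite -card_gt0 AE wx card_supp_xorc hdistxx.
  rewrite AE (two_critical_fixed_compl f2 fx fw) 1?eq_sym //.
  by apply/setP => j; rewrite !inE !ffunE addbN addbb.
by exists s, c; split=> //; exact: (circular_fixed_even fsc fx).
Qed.

(* On [D], [hdist_on D w (flip i x)] differs from [hdist_on D w x] by one, in a direction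
   decided by [w i == x i]; non-expansiveness only allows the decrease. *)
Lemma sub_fixed_flip (D : {set V}) (w x : cfg) i : i \in D ->
  (forall j, j \notin D -> w j = x j) -> (forall j, j \in D -> f w j = w j) ->
  f x = flip i x -> w i != x i.
Proof.
move=> iD wx fw fx.
have le : hdist_on D w (flip i x) <= hdist_on D w x.
  rewrite -(hdist_on_off wx) (@eq_hdist_on _ D w (f w)) => [|j /fw //].
  by rewrite -fx; exact: leq_trans (hdist_on_le _ _ _) (f_nonexp w x).
by apply/negP => /eqP wxi; move: le (hdist_on_flip w x iD); rewrite wxi eqxx /=; lia.
Qed.

Section ZeroCritical.
Hypothesis f0 : zero_critical f.
Variable i : V.

Lemma zero_critical_nofix (x : cfg) : f x != x.
Proof.
by apply/eqP => fx; have := card0_eq f0.1 x; rewrite inE fx eqxx.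
Qed.

Lemma zero_critical_flip b : exists2 x : cfg, x i = b & f x = flip i x.
Proof.
have [Ei0|Ei0] := eqVneq [set~ i] set0.
  exists [ffun _ => b]; first by rewrite ffunE.
  apply: eq_flip_off (zero_critical_nofix _) _ => j ji.
  by have := in_set0 j; rewrite -Ei0 !inE ji.
have EiP : [set~ i] \proper setT.
  by rewrite properT; apply/eqP => /setP/(_ i); rewrite !inE eqxx.
have /card_gt0P[x /sub_fixed_pointsP[xz fx]] := f0.2 _ [ffun _ => b] Ei0 EiP.
exists x; first by rewrite xz ?ffunE // !inE eqxx.
by apply: eq_flip_off (zero_critical_nofix x) _ => j ji; rewrite fx // !inE.
Qed.

Lemma zero_critical_antipodal :
  exists x : cfg, f x = flip i x /\ f (compl x) = compl (flip i x).
Proof.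
have [x xi fx] := zero_critical_flip false; have [y yi fy] := zero_critical_flip true.
suff yE : y = compl x.
  exists x; split=> //; rewrite -yE fy yE.
  by apply/ffunP => j; rewrite !ffunE addNb.
pose D := [set j | x j != y j].
have [/compl_of_diff_setT //|DT] := eqVneq D setT.
have iD : i \in D by rewrite inE xi yi.
have D0 : D != set0 by apply/set0Pn; exists i.
have DP : D \proper setT by rewrite properT.
have /card_gt0P[w /sub_fixed_pointsP[wx fw]] := f0.2 D x D0 DP.
have wy j : j \notin D -> w j = y j.
  by move=> jD; rewrite wx //; move: jD; rewrite inE negbK => /eqP.
have := sub_fixed_flip iD wx fw fx; have := sub_fixed_flip iD wy fw fy.
by rewrite xi yi; case: (w i).
Qed.

(* A proper nonempty [A] fixed by the centred map would turn a fixed point of the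
   subnetwork on whichever of [A], [~: A] contains [i] into a fixed point of [f]. *)
Lemma zero_critical_no_fixed_indic (x : cfg) :
  f x = flip i x -> f (compl x) = compl (flip i x) -> forall A : {set V},
  A != set0 -> centred f x (flip i x) (indic A) = indic A -> A = setT.
Proof.
move=> fx fxc A A0 gA; apply/eqP; apply: contraT => AT.
pose I := if i \in A then A else ~: A.
have IA : I = A \/ I = ~: A by rewrite /I; case: ifP; [left | right].
have iI : i \in I by rewrite /I; case: ifPn; rewrite ?inE.
have I0 : I != set0 by apply/set0Pn; exists i.
have IP : I \proper setT.
  rewrite properT /I; case: ifP => // _; apply: contra A0 => /eqP ACT.
  by rewrite -[A]setCK ACT setCT.
have /card_gt0P[p /sub_fixed_pointsP[pz fp]] := f0.2 I (xorc x (indic A)) I0 IP.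
have uA j : j \notin I -> xorc x p j = (j \in A) by move=> jI; rewrite !ffunE pz // !ffunE addKb.
have off := fixed_indic_off (centred_nonexp x (flip i x) f_nonexp)
  (centred_weight f_nonexp fx fxc) gA IA uA.
suff fpp : f p = p by move: (zero_critical_nofix p); rewrite fpp eqxx.
apply/ffunP => j; case: (boolP (j \in I)) => [/fp //|jI].
have ji : (j == i) = false by apply: contraNF jI => /eqP ->.
move: (off j jI); rewrite /centred xorcK !ffunE ji addbF.
by case: (x j); case: (p j); case: (f p j).
Qed.

End ZeroCritical.

Lemma zero_critical_circular :
  zero_critical f -> exists s c, circular_form f s c /\ odd #|supp c|.
Proof.
move=> f0; have [i _] := card_gt0P hV; have [x [fx fxc]] := zero_critical_antipodal f0 i.
have [s [c fsc]] :=
  circular_of_antipodal f_nonexp fx fxc hV (zero_critical_no_fixed_indic f0 fx fxc).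
exists s, c; split=> //; apply: contraT => even_c.
by have := (circular_two_critical fsc hV even_c).1; rewrite f0.1.
Qed.

End Critical.

Theorem theorem10 (V : finType) (hV : 0 < #|V|) (f : config V -> config V) :
  (positive_circular f <-> two_critical f /\ non_expansive f) /\
  (negative_circular f <-> zero_critical f /\ non_expansive f).
Proof.
rewrite positive_circularE negative_circularE; split; split.
- move=> [s [c [fsc even_c]]].
  by split; [exact: circular_two_critical fsc hV even_c | exact: circular_nonexp fsc].
- by move=> [f2 fN]; exact: two_critical_circular hV fN f2.
- move=> [s [c [fsc odd_c]]].
  by split; [exact: circular_zero_critical fsc odd_c | exact: circular_nonexp fsc].
- by move=> [f0 fN]; exact: zero_critical_circular hV fN f0.
Qed.
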